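(* Let $f(u)=|u|^{p-1}u$ with $p>1$, and fix $\beta<2$. Then $$d(\beta,c)=O\Big((c_*-c)^{\frac{p+3}{2(p-1)}}\Big)\qquad\text{as } c\to c_*^-.$$
   Context: Setting: $F(s)=\int_0^sf=|s|^{p+1}/(p+1)$, and $c_*=\sqrt{1-\beta_+^2/4}$ with $\beta_+=\max\{\beta,0\}$. Definitions, for $c^2<1$ and $\beta<2\sqrt{1-c^2}$: - $I(u)=\int u_{xx}^2-\beta u_x^2+(1-c^2)u^2\,dx$ and $K(u)=(p+1)\int F(u)\,dx$. - $m(\beta,c)=\inf\{I(u)/K(u)^{2/(p+1)}:u\in H^2(\mathbb R),u\ne0\}$. - $d(\beta,c)=\frac{p-1}{2(p+1)}m(\beta,c)^{(p+1)/(p-1)}$. Equivalently $d=E(\vec\varphi)+cQ(\vec\varphi)$ at any ground state $\vec\varphi=(\varphi,-c\varphi)$, where $E(u,v)=\int\frac12(u_{xx}^2-\beta u_x^2+u^2+v^2)-F(u)$ and $Q(u,v)=\int uv$. *)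

From Stdlib Require Import Reals Lra ClassicalEpsilon.
Open Scope R_scope.

(* |s|^q, with the convention 0^q = 0 (q > 0 in all uses). *)
Definition abspow (s q : R) : R :=
  if Req_EM_T s 0 then 0 else Rpower (Rabs s) q.

(* F(s) = |s|^(p+1)/(p+1), the primitive of f(u) = |u|^(p-1) u. *)
Definition Fprim (p s : R) : R := abspow s (p + 1) / (p + 1).

Definition IntR (g : R -> R) (v : R) : Prop :=
  exists L : R, 0 < L /\ (forall x, L < Rabs x -> g x = 0) /\
    exists pr : Riemann_integrable g (- L) L, RiemannInt pr = v.

Definition admissible (u u1 u2 : R -> R) : Prop :=
  (forall x, derivable_pt_lim u x (u1 x)) /\
  (forall x, derivable_pt_lim u1 x (u2 x)) /\
  continuity u2 /\
  (exists L : R, forall x, L < Rabs x -> u x = 0) /\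
  (exists x, u x <> 0).

Definition quotients (p beta c : R) (r : R) : Prop :=
  exists u u1 u2 Iv Fv,
    admissible u u1 u2 /\
    IntR (fun x => u2 x ^ 2 - beta * u1 x ^ 2 + (1 - c ^ 2) * u x ^ 2) Iv /\
    IntR (fun x => Fprim p (u x)) Fv /\
    r = Iv / Rpower ((p + 1) * Fv) (2 / (p + 1)).

Definition is_glb (E : R -> Prop) (m : R) : Prop :=
  (forall x, E x -> m <= x) /\ (forall b, (forall x, E x -> b <= x) -> b <= m).

(* Infimum of a set of reals (arbitrary value if no glb exists). *)
Definition Rinf (E : R -> Prop) : R :=
  epsilon (inhabits 0) (fun m => is_glb E m).

Definition m_inf (p beta c : R) : R := Rinf (quotients p beta c).

Definition d_val (p beta c : R) : R :=
  (p - 1) / (2 * (p + 1)) * Rpower (m_inf p beta c) ((p + 1) / (p - 1)).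

Definition c_star (beta : R) : R := sqrt (1 - Rmax beta 0 ^ 2 / 4).

From Stdlib Require Import Reals Lra Lia Psatz ClassicalEpsilon.
From Coquelicot Require Import Coquelicot.
Open Scope R_scope.

(* Take the wave packets u_w(x) = phi(e x) cos(xi x + w) with the bump
   phi(y) = ((1 - y^2)_+)^3, xi^2 = beta_+/2 and e = sqrt(c_* - c).  The choice of xi makes
   the symbol xi^4 - beta xi^2 + 1 - c^2 equal to c_*^2 - c^2 <= 2 e^2, so I(u_w) = O(e);
   for the two phases w and w - pi/2 the squares add up to phi(e x)^2, so one of the two
   masses K(u_w) is at least of order 1/e.  Hence m(beta, c) = O(e^(1 + 2/(p+1))) and
   d = O(m^((p+1)/(p-1))) = O((c_* - c)^((p+3)/(2(p-1)))).

   The infimum m is a Hilbert-epsilon choice, and Rpower sends non-positive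
   bases to 1, so the bound needs m to be a genuine positive infimum.  Integrating
   (u'' + t u)^2 >= 0 at t = 0, 1 and sqrt(1 - c^2) gives I(u) >= a (|u|_2^2 + |u'|_2^2)
   >= a sup u^2, while K(u) <= (sup u^2)^((p-1)/2) |u|_2^2; so every quotient is >= a > 0. *)

(** * Continuity and integration *)

Lemma continuity_pow (f : R -> R) (n : nat) :
  continuity f -> continuity (fun x => f x ^ n).
Proof.
  intros Hf; induction n as [|n IH]; simpl.
  - apply continuity_const; intros ??; reflexivity.
  - apply continuity_mult; assumption.
Qed.

Lemma continuity_affine_comp (f : R -> R) (a b : R) :
  continuity f -> continuity (fun x => f (a * x + b)).
Proof.
  intros Hf. apply (continuity_comp (fun x => a * x + b) f); [|exact Hf].
  apply continuity_plus; [apply continuity_mult|];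
    try (apply continuity_const; intros ??; reflexivity).
  apply derivable_continuous, derivable_id.
Qed.

Ltac continuity_tac :=
  repeat first
    [ solve [auto]
    | apply continuity_pow
    | apply continuity_plus | apply continuity_minus
    | apply continuity_mult | apply continuity_opp
    | apply continuity_cos | apply continuity_sin
    | apply (derivable_continuous _ derivable_id)
    | apply continuity_const; intros ??; reflexivity ].

Lemma continuity_continuous (f : R -> R) (x : R) : continuity f -> continuous f x.
Proof. intros Hf. apply continuity_pt_filterlim, Hf. Qed.

Lemma ex_RInt_continuity (f : R -> R) (a b : R) : continuity f -> ex_RInt f a b.
Proof.
  intros Hf. apply (ex_RInt_continuous (V := R_CompleteNormedModule)).
  intros x _. apply continuity_continuous, Hf.
Qed.

Lemma RInt_le_continuity (f g : R -> R) (a b : R) : a <= b -> continuity f -> continuity g ->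
  (forall x, a <= x <= b -> f x <= g x) -> RInt f a b <= RInt g a b.
Proof.
  intros Hab Hf Hg Hfg. apply RInt_le; try apply ex_RInt_continuity; auto.
  intros x Hx. apply Hfg. lra.
Qed.

Lemma RInt_ge0_continuity (f : R -> R) (a b : R) : a <= b -> continuity f ->
  (forall x, a <= x <= b -> 0 <= f x) -> 0 <= RInt f a b.
Proof.
  intros Hab Hf Hpos. apply RInt_ge_0; try apply ex_RInt_continuity; auto.
  intros x Hx. apply Hpos. lra.
Qed.

Lemma RInt_plus_continuity (f g : R -> R) (a b : R) : continuity f -> continuity g ->
  RInt (fun x => f x + g x) a b = RInt f a b + RInt g a b.
Proof.
  intros Hf Hg.
  exact (RInt_plus f g a b (ex_RInt_continuity f a b Hf) (ex_RInt_continuity g a b Hg)).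
Qed.

Lemma RInt_scal_continuity (f : R -> R) (a b k : R) : continuity f ->
  RInt (fun x => k * f x) a b = k * RInt f a b.
Proof. intros Hf. exact (RInt_scal f a b k (ex_RInt_continuity f a b Hf)). Qed.

Lemma RInt_Chasles_continuity (f : R -> R) (a b c : R) : continuity f ->
  RInt f a b + RInt f b c = RInt f a c.
Proof.
  intros Hf.
  exact (RInt_Chasles f a b c (ex_RInt_continuity f a b Hf) (ex_RInt_continuity f b c Hf)).
Qed.

(* [RInt] takes values in Coquelicot's module sort, where [ring] and [field] do not apply:
   pointwise equalities and integral identities are therefore stated at type [R]. *)
Lemma RInt_ext_R (f g : R -> R) (a b : R) : (forall x, f x = g x) ->
  RInt f a b = RInt g a b.
Proof. intros Hfg. apply RInt_ext. intros x _. apply Hfg. Qed.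

Lemma RInt_lincomb3 (f g h : R -> R) (a b k1 k2 k3 : R) :
  continuity f -> continuity g -> continuity h ->
  RInt (fun x => k1 * f x + k2 * g x + k3 * h x) a b =
  k1 * RInt f a b + k2 * RInt g a b + k3 * RInt h a b.
Proof.
  intros Hf Hg Hh.
  rewrite (RInt_plus_continuity (fun x => k1 * f x + k2 * g x) (fun x => k3 * h x))
    by continuity_tac.
  rewrite (RInt_plus_continuity (fun x => k1 * f x) (fun x => k2 * g x)) by continuity_tac.
  rewrite !RInt_scal_continuity by assumption. reflexivity.
Qed.

Lemma RInt_const_R (a b k : R) : RInt (fun _ => k) a b = (b - a) * k.
Proof. exact (RInt_const a b k). Qed.

Lemma RInt_zero_outside (f : R -> R) (L1 L2 : R) : continuity f -> 0 <= L1 <= L2 ->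
  (forall x, L1 < Rabs x -> f x = 0) -> RInt f (- L1) L1 = RInt f (- L2) L2.
Proof.
  intros Hf HL Hzero.
  assert (Hnull : forall a b, a <= b -> (forall x, a < x < b -> L1 < Rabs x) -> RInt f a b = 0).
  { intros a b Hab Hout. rewrite (RInt_ext f (fun _ => 0)), RInt_const_R; [apply Rmult_0_r|].
    intros x Hx. rewrite Rmin_left, Rmax_right in Hx by lra. apply Hzero, Hout, Hx. }
  rewrite <- (RInt_Chasles_continuity f (- L2) (- L1) L2),
          <- (RInt_Chasles_continuity f (- L1) L1 L2) by exact Hf.
  rewrite (Hnull (- L2) (- L1)), (Hnull L1 L2); try lra;
    intros x Hx; [rewrite Rabs_right | rewrite Rabs_left]; lra.
Qed.

Lemma RInt_pos_at (g : R -> R) (a b x0 : R) : continuity g -> (forall x, 0 <= g x) ->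
  a < x0 < b -> 0 < g x0 -> 0 < RInt g a b.
Proof.
  intros Hg Hpos Hx0 Hgx0.
  destruct (Hg x0 (g x0) Hgx0) as [al [Hal Hnear]].
  set (r := Rmin al (Rmin (x0 - a) (b - x0)) / 2).
  assert (Hr : 0 < r /\ r < al /\ a < x0 - r /\ x0 + r < b).
  { assert (0 < Rmin al (Rmin (x0 - a) (b - x0))) by (repeat apply Rmin_pos; lra).
    pose proof (Rmin_l al (Rmin (x0 - a) (b - x0))).
    pose proof (Rmin_r al (Rmin (x0 - a) (b - x0))).
    pose proof (Rmin_l (x0 - a) (b - x0)). pose proof (Rmin_r (x0 - a) (b - x0)).
    unfold r; lra. }
  assert (Hmid : 0 < RInt g (x0 - r) (x0 + r)).
  { apply RInt_gt_0; [lra| |intros; apply continuity_continuous, Hg].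
    intros x Hx. destruct (Req_dec x x0) as [->|Hne]; [exact Hgx0|].
    assert (Hd : R_dist x x0 < al) by (unfold R_dist; apply Rabs_def1; lra).
    specialize (Hnear x (conj (conj I (not_eq_sym Hne)) Hd)). simpl in Hnear.
    unfold R_dist in Hnear. apply Rabs_def2 in Hnear. lra. }
  rewrite <- (RInt_Chasles_continuity g a (x0 - r) b),
          <- (RInt_Chasles_continuity g (x0 - r) (x0 + r) b) by exact Hg.
  assert (0 <= RInt g a (x0 - r)) by (apply RInt_ge0_continuity; auto; lra).
  assert (0 <= RInt g (x0 + r) b) by (apply RInt_ge0_continuity; auto; lra).
  lra.
Qed.

Lemma RInt_derive_eq (f df : R -> R) (a b : R) :
  (forall x : R, is_derive f x (df x)) -> continuity df -> RInt df a b = f b - f a :> R.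
Proof.
  intros Hd Hc. apply is_RInt_unique, (is_RInt_derive (V := R_CompleteNormedModule)).
  - intros x _. apply Hd.
  - intros x _. apply continuity_continuous, Hc.
Qed.

Lemma is_derive_Rmult (f g : R -> R) (x df dg : R) :
  is_derive f x df -> is_derive g x dg -> is_derive (fun t => f t * g t) x (df * g x + f x * dg).
Proof. intros Hf Hg. apply (is_derive_mult f g); auto. intros; apply Rmult_comm. Qed.

Lemma is_derive_comp_R (f g : R -> R) (x df dg : R) :
  is_derive f (g x) df -> is_derive g x dg -> is_derive (fun t => f (g t)) x (dg * df).
Proof. intros Hf Hg. exact (is_derive_comp f g x df dg Hf Hg). Qed.

Lemma is_derive_0_of_sq_bound (f : R -> R) (C : R) : 0 < C -> f 0 = 0 ->
  (forall k, Rabs k <= 1 -> Rabs (f k) <= C * k ^ 2) -> is_derive f 0 0.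
Proof.
  intros HC Hf0 Hbound. apply is_derive_Reals. intros eps Heps.
  assert (Hd : 0 < Rmin 1 (eps / C)) by (apply Rmin_pos; [lra | apply Rdiv_lt_0_compat; lra]).
  exists (mkposreal _ Hd). intros k Hk Hlt. simpl in Hlt.
  pose proof (Rmin_l 1 (eps / C)). pose proof (Rmin_r 1 (eps / C)).
  assert (Hak : 0 < Rabs k) by (apply Rabs_pos_lt, Hk).
  replace (0 + k) with k by ring. rewrite Hf0.
  replace ((f k - 0) / k - 0) with (f k / k) by (field; exact Hk).
  rewrite Rabs_div by exact Hk.
  apply (Rmult_lt_reg_r (Rabs k)); [exact Hak|].
  unfold Rdiv. rewrite Rmult_assoc, Rinv_l, Rmult_1_r by lra.
  eapply Rle_lt_trans; [apply Hbound; lra|].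
  rewrite <- (pow2_abs k).
  assert (C * Rabs k < eps).
  { apply (Rmult_lt_reg_r (/ C)); [apply Rinv_0_lt_compat; lra|].
    replace (C * Rabs k * / C) with (Rabs k) by (field; lra). lra. }
  nra.
Qed.

Lemma continuity_of_derive (f f' : R -> R) : (forall x, is_derive f x (f' x)) -> continuity f.
Proof.
  intros Hd x. apply continuity_pt_filterlim, (ex_derive_continuous (V := R_NormedModule)).
  exists (f' x). apply Hd.
Qed.

(** * The power [|s|^q] *)

Lemma exp_le_compat (x y : R) : x <= y -> exp x <= exp y.
Proof. intros [Hlt | ->]; [left; apply exp_increasing, Hlt | right; reflexivity]. Qed.

Lemma abspow_0 (q : R) : abspow 0 q = 0.
Proof. unfold abspow. destruct (Req_EM_T 0 0); [reflexivity | contradiction]. Qed.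

Lemma abspow_neq0 (s q : R) : s <> 0 -> abspow s q = Rpower (Rabs s) q.
Proof. intros Hs. unfold abspow. destruct (Req_EM_T s 0); [contradiction | reflexivity]. Qed.

Lemma abspow_gt0 (s q : R) : s <> 0 -> 0 < abspow s q.
Proof. intros Hs. rewrite abspow_neq0 by exact Hs. apply exp_pos. Qed.

Lemma abspow_ge0 (s q : R) : 0 <= abspow s q.
Proof.
  destruct (Req_EM_T s 0) as [->|Hs]; [rewrite abspow_0; lra | left; apply abspow_gt0, Hs].
Qed.

Lemma abspow_add2 (s q : R) : s <> 0 -> abspow s (q + 2) = Rpower (Rabs s) q * s ^ 2.
Proof.
  intros Hs. rewrite abspow_neq0 by exact Hs.
  replace 2 with (INR 2) by (simpl; ring).
  rewrite Rpower_plus, Rpower_pow, pow2_abs by (apply Rabs_pos_lt, Hs). reflexivity.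
Qed.

Lemma abspow_le_abs (s q : R) : 1 <= q -> Rabs s <= 1 -> abspow s q <= Rabs s.
Proof.
  intros Hq Hs. destruct (Req_EM_T s 0) as [->|Hnz].
  - rewrite abspow_0, Rabs_R0; lra.
  - assert (Habs : 0 < Rabs s) by (apply Rabs_pos_lt, Hnz).
    rewrite abspow_neq0 by exact Hnz.
    replace q with (1 + (q - 1)) by ring. rewrite Rpower_plus, Rpower_1 by exact Habs.
    assert (Hle1 : Rpower (Rabs s) (q - 1) <= 1).
    { unfold Rpower. rewrite <- exp_0 at 2. apply exp_le_compat.
      assert (ln (Rabs s) <= 0) by (rewrite <- ln_1; apply ln_le; lra). nra. }
    nra.
Qed.

Lemma continuity_abspow (q : R) : 1 <= q -> continuity (fun s => abspow s q).
Proof.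
  intros Hq s. destruct (Req_EM_T s 0) as [->|Hs].
  - intros eps Heps. exists (Rmin 1 eps). split; [apply Rmin_pos; lra|].
    intros x [_ Hx]. simpl in *. unfold R_dist in *.
    rewrite abspow_0, Rminus_0_r in *. rewrite Rabs_right by apply Rle_ge, abspow_ge0.
    pose proof (Rmin_l 1 eps). pose proof (Rmin_r 1 eps).
    pose proof (abspow_le_abs x q Hq ltac:(lra)). lra.
  - assert (Habs : 0 < Rabs s) by (apply Rabs_pos_lt, Hs).
    apply continuity_pt_filterlim. change (continuous (fun t => abspow t q) s).
    apply (continuous_ext_loc (fun t => abspow t q) (fun t => exp (q * ln (Rabs t)))).
    + exists (mkposreal _ Habs). intros y Hy. simpl.
      rewrite abspow_neq0; [reflexivity|].
      intros ->. change (Rabs (0 - s) < Rabs s) in Hy.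
      rewrite Rminus_0_l, Rabs_Ropp in Hy. lra.
    + apply continuity_pt_filterlim.
      apply (continuity_pt_comp (fun t => q * ln (Rabs t)) exp);
        [|apply derivable_continuous_pt, derivable_pt_exp].
      apply continuity_pt_scal, (continuity_pt_comp Rabs ln); [apply Rcontinuity_abs|].
      apply derivable_continuous_pt. exists (/ Rabs s). apply derivable_pt_lim_ln, Habs.
Qed.

Lemma abspow_le_sup (p v S : R) : 1 <= p -> v ^ 2 <= S ->
  abspow v (p + 1) <= Rpower S ((p - 1) / 2) * v ^ 2.
Proof.
  intros Hp Hv. destruct (Req_EM_T v 0) as [->|Hnz].
  - rewrite abspow_0. simpl. lra.
  - replace (p + 1) with ((p - 1) + 2) by ring. rewrite abspow_add2 by exact Hnz.
    apply Rmult_le_compat_r; [apply pow2_ge_0|].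
    assert (Habs : 0 < Rabs v) by (apply Rabs_pos_lt, Hnz).
    replace (Rpower (Rabs v) (p - 1)) with (Rpower (Rabs v ^ 2) ((p - 1) / 2)).
    + rewrite pow2_abs. apply Rle_Rpower_l; [lra|]. split; [|exact Hv].
      rewrite <- pow2_abs. apply pow_lt, Habs.
    + replace (Rabs v ^ 2) with (Rpower (Rabs v) (INR 2)) by (apply Rpower_pow, Habs).
      rewrite Rpower_mult. f_equal. simpl. field.
Qed.

Lemma abspow_ge_sq (p a delta : R) : 1 <= p -> 0 < delta ->
  Rpower delta (p - 1) * (a ^ 2 - delta ^ 2) <= abspow a (p + 1).
Proof.
  intros Hp Hdelta. assert (Hpow : 0 < Rpower delta (p - 1)) by apply exp_pos.
  pose proof (abspow_ge0 a (p + 1)).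
  destruct (Rle_dec (Rabs a) delta) as [Hsmall|Hbig].
  - assert (a ^ 2 <= delta ^ 2) by (rewrite <- (pow2_abs a); pose proof (Rabs_pos a); nra).
    nra.
  - assert (Hnz : a <> 0) by (intros ->; rewrite Rabs_R0 in Hbig; lra).
    replace (p + 1) with ((p - 1) + 2) by ring. rewrite abspow_add2 by exact Hnz.
    assert (Rpower delta (p - 1) <= Rpower (Rabs a) (p - 1)) by (apply Rle_Rpower_l; lra).
    pose proof (pow2_ge_0 a). pose proof (pow2_ge_0 delta). nra.
Qed.

Lemma Rpower_inv_le (K S q : R) : 0 < q -> 0 < K -> 0 < S -> K <= Rpower S q ->
  Rpower K (/ q) <= S.
Proof.
  intros Hq HK HS Hle.
  apply Rle_trans with (Rpower (Rpower S q) (/ q)).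
  - apply Rle_Rpower_l; [apply Rlt_le, Rinv_0_lt_compat, Hq | split; assumption].
  - rewrite Rpower_mult, Rinv_r, Rpower_1 by lra. lra.
Qed.

(** * C^2 functions with compact support *)

Lemma IntR_RInt (g : R -> R) (v M : R) : IntR g v -> continuity g -> 0 < M ->
  (forall x, M < Rabs x -> g x = 0) -> v = RInt g (- M) M.
Proof.
  intros [L [HL [Hzero [pr Hpr]]]] Hg HM HzeroM.
  rewrite <- Hpr, <- RInt_Reals.
  destruct (Rle_dec L M).
  - apply RInt_zero_outside; auto; lra.
  - symmetry. apply RInt_zero_outside; auto; lra.
Qed.

Lemma IntR_of_RInt (g : R -> R) (M : R) : 0 < M -> continuity g ->
  (forall x, M < Rabs x -> g x = 0) -> IntR g (RInt g (- M) M).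
Proof.
  intros HM Hg Hzero. exists M. split; [exact HM|]. split; [exact Hzero|].
  exists (ex_RInt_Reals_0 _ _ _ (ex_RInt_continuity g (- M) M Hg)).
  rewrite <- RInt_Reals. reflexivity.
Qed.

Lemma IntR_Fprim (p Fv M : R) (u : R -> R) : 1 < p -> continuity u -> 0 < M ->
  IntR (fun x => Fprim p (u x)) Fv -> (forall x, M < Rabs x -> u x = 0) ->
  (p + 1) * Fv = RInt (fun x => abspow (u x) (p + 1)) (- M) M.
Proof.
  intros Hp Hu HM HF Hzero.
  assert (Hc : continuity (fun x => abspow (u x) (p + 1))).
  { apply (continuity_comp u (fun s => abspow s (p + 1))); [exact Hu|].
    apply continuity_abspow. lra. }
  rewrite (IntR_RInt _ _ M HF); [| unfold Fprim; continuity_tac | exact HM |].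
  - rewrite <- RInt_scal_continuity by (unfold Fprim; continuity_tac).
    apply RInt_ext_R. intros x. unfold Fprim. field. lra.
  - intros x Hx. unfold Fprim. rewrite Hzero, abspow_0 by exact Hx. lra.
Qed.

Lemma is_derive_locally_zero (f : R -> R) (x r : R) : 0 < r ->
  (forall y, Rabs (y - x) < r -> f y = 0) -> is_derive f x 0.
Proof.
  intros Hr Hzero.
  apply (is_derive_ext_loc (fun _ => 0));
    [|exact (is_derive_const (K := R_AbsRing) (V := R_NormedModule) 0 x)].
  exists (mkposreal _ Hr). intros y Hy. symmetry. apply Hzero, Hy.
Qed.

Lemma derive_zero_outside (f f' : R -> R) (L : R) : (forall x, is_derive f x (f' x)) ->
  (forall x, L < Rabs x -> f x = 0) -> forall x, L < Rabs x -> f' x = 0.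
Proof.
  intros Hd Hzero x Hx.
  rewrite <- (is_derive_unique _ _ _ (Hd x)). apply is_derive_unique.
  apply (is_derive_locally_zero _ _ (Rabs x - L)); [lra|].
  intros y Hy. apply Hzero. rewrite Rabs_minus_sym in Hy.
  pose proof (Rabs_triang_inv x (x - y)) as Htri.
  replace (x - (x - y)) with y in Htri by ring. lra.
Qed.

Definition C2_supported_in (u u1 u2 : R -> R) (M : R) : Prop :=
  (forall x, is_derive u x (u1 x)) /\ (forall x, is_derive u1 x (u2 x)) /\ continuity u2 /\
  0 < M /\ forall x, M <= Rabs x -> u x = 0 /\ u1 x = 0 /\ u2 x = 0.

Lemma admissible_support (u u1 u2 : R -> R) : admissible u u1 u2 ->
  exists M, C2_supported_in u u1 u2 M.
Proof.
  intros [Hu [Hu1 [Hu2 [[L HL] _]]]].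
  assert (Hd : forall x, is_derive u x (u1 x)) by (intros; apply is_derive_Reals, Hu).
  assert (Hd1 : forall x, is_derive u1 x (u2 x)) by (intros; apply is_derive_Reals, Hu1).
  assert (Hz : forall x, Rabs L < Rabs x -> u x = 0)
    by (intros x Hx; apply HL; pose proof (Rle_abs L); lra).
  pose proof (derive_zero_outside u u1 _ Hd Hz) as Hz1.
  pose proof (derive_zero_outside u1 u2 _ Hd1 Hz1) as Hz2.
  exists (Rabs L + 1). split; [exact Hd|]. split; [exact Hd1|]. split; [exact Hu2|].
  split; [pose proof (Rabs_pos L); lra|].
  intros x Hx. repeat split; [apply Hz | apply Hz1 | apply Hz2]; lra.
Qed.

Definition energy_density (beta c : R) (u u1 u2 : R -> R) (x : R) : R :=
  u2 x ^ 2 - beta * u1 x ^ 2 + (1 - c ^ 2) * u x ^ 2.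

Section SupportedEstimates.

Variables (u u1 u2 : R -> R) (M : R).
Hypothesis HuM : C2_supported_in u u1 u2 M.

Let Hu : forall x, is_derive u x (u1 x) := proj1 HuM.
Let Hu1 : forall x, is_derive u1 x (u2 x) := proj1 (proj2 HuM).
Let Hu2 : continuity u2 := proj1 (proj2 (proj2 HuM)).
Let HM : 0 < M := proj1 (proj2 (proj2 (proj2 HuM))).
Let Hsupp : forall x, M <= Rabs x -> u x = 0 /\ u1 x = 0 /\ u2 x = 0 :=
  proj2 (proj2 (proj2 (proj2 HuM))).

Lemma continuity_u : continuity u.
Proof. exact (continuity_of_derive u u1 Hu). Qed.

Lemma continuity_u1 : continuity u1.
Proof. exact (continuity_of_derive u1 u2 Hu1). Qed.

Local Hint Resolve Hu Hu1 Hu2 continuity_u continuity_u1 : core.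

Lemma vanish_at_M : u M = 0 /\ u1 M = 0 /\ u (- M) = 0 /\ u1 (- M) = 0.
Proof.
  destruct (Hsupp M) as [H0 [H1 _]]; [apply Rle_abs|].
  destruct (Hsupp (- M)) as [H0' [H1' _]]; [rewrite Rabs_Ropp; apply Rle_abs|].
  auto.
Qed.

Lemma RInt_deriv_sq_by_parts :
  RInt (fun x => u1 x ^ 2) (- M) M = - RInt (fun x => u x * u2 x) (- M) M :> R.
Proof.
  assert (Hparts : RInt (fun x => u1 x ^ 2 + u x * u2 x) (- M) M = 0 :> R).
  { rewrite (RInt_derive_eq (fun x => u x * u1 x)); [|intros x|continuity_tac].
    - destruct vanish_at_M as [-> [-> [-> ->]]]. ring.
    - replace (u1 x ^ 2 + u x * u2 x) with (u1 x * u1 x + u x * u2 x) by ring.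
      apply is_derive_Rmult; auto. }
  rewrite RInt_plus_continuity in Hparts by continuity_tac. lra.
Qed.

Lemma sq_le_H1_norm (x : R) :
  u x ^ 2 <= RInt (fun t => u t ^ 2) (- M) M + RInt (fun t => u1 t ^ 2) (- M) M.
Proof.
  rewrite <- RInt_plus_continuity by continuity_tac.
  destruct (Rlt_le_dec (Rabs x) M) as [Hx|Hx].
  2: { destruct (Hsupp x Hx) as [-> _]. simpl. rewrite Rmult_0_l.
       apply RInt_ge0_continuity; [lra|continuity_tac|]. intros; nra. }
  apply Rabs_def2 in Hx.
  assert (Hftc : RInt (fun t => 2 * u t * u1 t) (- M) x = u x ^ 2 :> R).
  { rewrite (RInt_derive_eq (fun t => u t * u t)); [|intros t|continuity_tac].
    - destruct vanish_at_M as [_ [_ [-> _]]]. ring.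
    - replace (2 * u t * u1 t) with (u1 t * u t + u t * u1 t) by ring.
      apply is_derive_Rmult; auto. }
  rewrite <- Hftc, <- (RInt_Chasles_continuity _ (- M) x M) by continuity_tac.
  assert (0 <= RInt (fun t => u t ^ 2 + u1 t ^ 2) x M)
    by (apply RInt_ge0_continuity; [lra|continuity_tac|intros; nra]).
  assert (RInt (fun t => 2 * u t * u1 t) (- M) x <= RInt (fun t => u t ^ 2 + u1 t ^ 2) (- M) x).
  { apply RInt_le_continuity; [lra|continuity_tac|continuity_tac|].
    intros t _. pose proof (pow2_ge_0 (u t - u1 t)). nra. }
  lra.
Qed.

Lemma RInt_quadratic_nonneg (t : R) :
  0 <= RInt (fun x => u2 x ^ 2) (- M) M + t ^ 2 * RInt (fun x => u x ^ 2) (- M) M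
       + 2 * t * RInt (fun x => u x * u2 x) (- M) M.
Proof.
  replace (RInt (fun x => u2 x ^ 2) (- M) M) with (1 * RInt (fun x => u2 x ^ 2) (- M) M)
    by ring.
  rewrite <- RInt_lincomb3 by continuity_tac.
  apply RInt_ge0_continuity; [lra|continuity_tac|].
  intros x _. pose proof (pow2_ge_0 (u2 x + t * u x)). nra.
Qed.

Lemma RInt_abspow_le (p : R) : 1 <= p ->
  RInt (fun x => abspow (u x) (p + 1)) (- M) M <=
  Rpower (RInt (fun t => u t ^ 2) (- M) M + RInt (fun t => u1 t ^ 2) (- M) M) ((p + 1) / 2).
Proof.
  intros Hp.
  set (B := RInt (fun t => u t ^ 2) (- M) M).
  set (S := B + RInt (fun t => u1 t ^ 2) (- M) M).
  assert (HB : 0 <= B) by (apply RInt_ge0_continuity; [lra|continuity_tac|intros; nra]).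
  assert (HBS : B <= S).
  { assert (0 <= RInt (fun t => u1 t ^ 2) (- M) M)
      by (apply RInt_ge0_continuity; [lra|continuity_tac|intros; nra]).
    unfold S; lra. }
  assert (Hint : RInt (fun x => abspow (u x) (p + 1)) (- M) M <= Rpower S ((p - 1) / 2) * B).
  { unfold B. rewrite <- RInt_scal_continuity by continuity_tac.
    apply RInt_le_continuity; [lra| |continuity_tac|].
    - apply (continuity_comp u (fun s => abspow s (p + 1))); auto.
      apply continuity_abspow. lra.
    - intros x _. apply abspow_le_sup; [exact Hp|apply sq_le_H1_norm]. }
  destruct (Req_dec B 0) as [HB0|HB0].
  - rewrite HB0, Rmult_0_r in Hint. left. eapply Rle_lt_trans; [exact Hint|apply exp_pos].
  - replace ((p + 1) / 2) with ((p - 1) / 2 + 1) by field.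
    rewrite Rpower_plus, Rpower_1 by lra.
    pose proof (exp_pos ((p - 1) / 2 * ln S)). unfold Rpower in *. nra.
Qed.

Lemma RInt_abspow_pos (p x0 : R) : 1 <= p -> u x0 <> 0 ->
  0 < RInt (fun x => abspow (u x) (p + 1)) (- M) M.
Proof.
  intros Hp Hx0.
  assert (Hin : Rabs x0 < M) by (apply Rnot_le_lt; intros Hout; apply Hx0, (Hsupp _ Hout)).
  apply Rabs_def2 in Hin.
  apply (RInt_pos_at _ _ _ x0); [| intros; apply abspow_ge0 | lra | apply abspow_gt0, Hx0].
  apply (continuity_comp u (fun s => abspow s (p + 1))); [exact continuity_u|].
  apply continuity_abspow. lra.
Qed.

Lemma IntR_energy_density (beta c Iv : R) : IntR (energy_density beta c u u1 u2) Iv ->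
  Iv = RInt (fun x => u2 x ^ 2) (- M) M - beta * RInt (fun x => u1 x ^ 2) (- M) M
       + (1 - c ^ 2) * RInt (fun x => u x ^ 2) (- M) M.
Proof.
  intros HI. rewrite (IntR_RInt _ _ M HI); [| unfold energy_density; continuity_tac | exact HM |].
  - rewrite (RInt_ext_R _ (fun x => 1 * u2 x ^ 2 + (- beta) * u1 x ^ 2 + (1 - c ^ 2) * u x ^ 2))
      by (intros; unfold energy_density; ring).
    rewrite RInt_lincomb3 by continuity_tac. ring.
  - intros x Hx. unfold energy_density. destruct (Hsupp x) as [-> [-> ->]]; [lra | ring].
Qed.

End SupportedEstimates.

(** * Positivity of the quotients *)

(* [A], [B], [D] stand for the squared L^2 norms of [u''], [u], [u'] (so that
   [int u u'' = - D]); the hypothesis is [int (u'' + t u)^2 >= 0]. *)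
Lemma energy_coercive (beta q : R) : Rmax beta 0 ^ 2 < 4 * q ->
  exists a, 0 < a /\ forall A B D, 0 <= A -> 0 <= B -> 0 <= D ->
    (forall t, 0 <= A + t ^ 2 * B - 2 * t * D) -> a * (B + D) <= A - beta * D + q * B.
Proof.
  intros Hbq.
  set (bp := Rmax beta 0) in *.
  assert (Hbp : 0 <= bp /\ beta <= bp) by (split; [apply Rmax_r | apply Rmax_l]).
  assert (Hq : 0 < q) by nra.
  set (s := sqrt q).
  assert (Hs : 0 < s) by (apply sqrt_lt_R0, Hq).
  assert (Hs2 : s ^ 2 = q) by (apply pow2_sqrt; lra).
  set (w := bp / (2 * s)).
  assert (Hw : 0 <= w < 1).
  { assert (bp < 2 * s) by (apply Rnot_le_lt; intros Hge; nra).
    unfold w; split; [apply Rdiv_le_0_compat; lra|].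
    apply (Rmult_lt_reg_r (2 * s)); [lra|]. unfold Rdiv. rewrite Rmult_assoc, Rinv_l; lra. }
  assert (Hbpw : bp = 2 * s * w) by (unfold w; field; lra).
  set (m0 := Rmin 1 q).
  assert (Hm0 : 0 < m0 /\ m0 <= 1 /\ m0 <= q)
    by (unfold m0; repeat split; [apply Rmin_pos; lra | apply Rmin_l | apply Rmin_r]).
  exists ((1 - w) * m0 * (2 / 3)).
  split; [apply Rmult_lt_0_compat; [apply Rmult_lt_0_compat|]; lra|].
  intros A B D HA HB HD Hquad.
  (* [t = sqrt q] absorbs the [beta D] term, [t = 1] bounds [D] by [A + B]. *)
  pose proof (Hquad s) as Hs_quad. pose proof (Hquad 1) as H1_quad.
  rewrite Hs2 in Hs_quad.
  assert (beta * D <= w * (A + q * B)) by nra.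
  assert (Hmain : (1 - w) * (m0 * (A + B)) <= A - beta * D + q * B).
  { assert (m0 * (A + B) <= A + q * B) by nra.
    assert ((1 - w) * (m0 * (A + B)) <= (1 - w) * (A + q * B)) by (apply Rmult_le_compat_l; lra).
    lra. }
  assert ((1 - w) * m0 * (2 / 3 * (B + D)) <= (1 - w) * (m0 * (A + B))).
  { rewrite Rmult_assoc. apply Rmult_le_compat_l; [lra|]. apply Rmult_le_compat_l; lra. }
  lra.
Qed.

Lemma quotients_lower_bound (p beta c : R) : 1 < p -> Rmax beta 0 ^ 2 < 4 * (1 - c ^ 2) ->
  exists a, 0 < a /\ forall r, quotients p beta c r -> a <= r.
Proof.
  intros Hp Hbc.
  destruct (energy_coercive beta (1 - c ^ 2) Hbc) as [a [Ha Hcoer]].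
  exists a. split; [exact Ha|].
  intros r [u [u1 [u2 [Iv [Fv [Hadm [HI [HF ->]]]]]]]].
  destruct (admissible_support u u1 u2 Hadm) as [M HuM].
  destruct Hadm as [_ [_ [_ [_ [x0 Hx0]]]]].
  pose proof HuM as [_ [_ [Hu2 [HM Hsupp]]]].
  pose proof (continuity_u u u1 u2 M HuM) as Cu.
  pose proof (continuity_u1 u u1 u2 M HuM) as Cu1.
  set (A := RInt (fun x => u2 x ^ 2) (- M) M).
  set (B := RInt (fun x => u x ^ 2) (- M) M).
  set (D := RInt (fun x => u1 x ^ 2) (- M) M).
  assert (Hnonneg : forall f : R -> R, continuity f -> 0 <= RInt (fun x => f x ^ 2) (- M) M)
    by (intros f Hf; apply RInt_ge0_continuity; [lra|continuity_tac|intros; nra]).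
  assert (HIv : a * (B + D) <= Iv).
  { rewrite (IntR_energy_density u u1 u2 M HuM beta c Iv HI). fold A B D.
    apply Hcoer; try apply Hnonneg; try assumption.
    intros t. pose proof (RInt_quadratic_nonneg u u1 u2 M HuM t) as Hquad.
    pose proof (RInt_deriv_sq_by_parts u u1 u2 M HuM) as Hparts. fold A B D in Hquad, Hparts.
    replace (RInt (fun x => u x * u2 x) (- M) M) with (- D) in Hquad by lra. lra. }
  assert (HS : 0 < B + D).
  { pose proof (sq_le_H1_norm u u1 u2 M HuM x0) as Hsob. fold B D in Hsob.
    pose proof (pow2_gt_0 _ Hx0). lra. }
  set (K := (p + 1) * Fv).
  assert (HK : K = RInt (fun x => abspow (u x) (p + 1)) (- M) M)
    by (apply IntR_Fprim; auto; intros x Hx; apply Hsupp; lra).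
  assert (HKpos : 0 < K) by (rewrite HK; apply (RInt_abspow_pos u u1 u2 M HuM p x0); lra).
  assert (HKth : Rpower K (2 / (p + 1)) <= B + D).
  { replace (2 / (p + 1)) with (/ ((p + 1) / 2)) by (field; lra).
    apply Rpower_inv_le; [lra | exact HKpos | exact HS |].
    rewrite HK. apply (RInt_abspow_le u u1 u2 M HuM). lra. }
  pose proof (exp_pos (2 / (p + 1) * ln K)) as HP. fold (Rpower K (2 / (p + 1))) in HP.
  fold K. apply (Rmult_le_reg_r (Rpower K (2 / (p + 1)))); [exact HP|].
  unfold Rdiv. rewrite Rmult_assoc, Rinv_l, Rmult_1_r by lra. nra.
Qed.

(** * Wave packets *)

Definition pos_part (t : R) : R := (t + Rabs t) / 2.

Lemma pos_part_of_nonneg (t : R) : 0 <= t -> pos_part t = t.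
Proof. intros Ht. unfold pos_part. rewrite Rabs_right; lra. Qed.

Lemma pos_part_of_nonpos (t : R) : t <= 0 -> pos_part t = 0.
Proof. intros Ht. unfold pos_part. rewrite Rabs_left1; lra. Qed.

Lemma pos_part_bounds (t : R) : 0 <= pos_part t <= Rabs t.
Proof.
  destruct (Rle_dec 0 t).
  - rewrite pos_part_of_nonneg, Rabs_right; lra.
  - rewrite pos_part_of_nonpos; [split; [lra | apply Rabs_pos] | lra].
Qed.

Lemma continuity_pos_part : continuity pos_part.
Proof.
  unfold pos_part. intros t. apply continuity_pt_div;
    [| apply continuity_pt_const; intros ??; reflexivity | lra].
  apply continuity_pt_plus;
    [apply derivable_continuous_pt, derivable_pt_id | apply Rcontinuity_abs].
Qed.

Lemma is_derive_pos_part_pow (n : nat) (t : R) : (0 < n)%nat ->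
  is_derive (fun s => pos_part s ^ S n) t (INR (S n) * pos_part t ^ n).
Proof.
  intros Hn. destruct (Rtotal_order t 0) as [Hneg|[->|Hpos]].
  - rewrite pos_part_of_nonpos by lra. rewrite pow_i, Rmult_0_r by exact Hn.
    apply (is_derive_locally_zero _ _ (- t)); [lra|]. intros y Hy. apply Rabs_def2 in Hy.
    rewrite pos_part_of_nonpos by lra. apply pow_i. lia.
  - rewrite pos_part_of_nonpos by lra. rewrite pow_i, Rmult_0_r by exact Hn.
    apply (is_derive_0_of_sq_bound _ 1);
      [lra | rewrite pos_part_of_nonpos by lra; apply pow_i; lia|].
    intros k Hk. destruct n as [|m]; [lia|].
    pose proof (pos_part_bounds k) as [Hp0 Hpk].
    rewrite Rabs_right by (apply Rle_ge, pow_le, Hp0).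
    apply Rle_trans with (Rabs k ^ (2 + m)); [apply pow_incr; lra|].
    rewrite pow_add, pow2_abs, Rmult_1_l.
    assert (Rabs k ^ m <= 1 ^ m) by (apply pow_incr; split; [apply Rabs_pos | exact Hk]).
    rewrite pow1 in *. pose proof (pow2_ge_0 k). nra.
  - rewrite pos_part_of_nonneg by lra.
    apply (is_derive_ext_loc (fun s => s ^ S n)).
    + exists (mkposreal _ Hpos). intros y Hy.
      change (Rabs (y - t) < t) in Hy. apply Rabs_def2 in Hy.
      rewrite pos_part_of_nonneg by lra. reflexivity.
    + replace (INR (S n) * t ^ n) with (INR (S n) * 1 * t ^ Init.Nat.pred (S n)) by (simpl; ring).
      apply (is_derive_pow (fun s => s)), (is_derive_id (K := R_AbsRing)).
Qed.

Definition bump (y : R) : R := pos_part (1 - y ^ 2) ^ 3.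
Definition bump1 (y : R) : R := -6 * y * pos_part (1 - y ^ 2) ^ 2.
Definition bump2 (y : R) : R := -6 * pos_part (1 - y ^ 2) ^ 2 + 24 * y ^ 2 * pos_part (1 - y ^ 2).

Lemma is_derive_pos_part_pow_comp (n : nat) (y : R) : (0 < n)%nat ->
  is_derive (fun t => pos_part (1 - t ^ 2) ^ S n) y
    (- 2 * y * (INR (S n) * pos_part (1 - y ^ 2) ^ n)).
Proof.
  intros Hn. apply (is_derive_comp_R (fun s => pos_part s ^ S n) (fun t => 1 - t ^ 2)).
  - apply is_derive_pos_part_pow, Hn.
  - auto_derive; [easy | ring].
Qed.

Lemma is_derive_bump (y : R) : is_derive bump y (bump1 y).
Proof.
  replace (bump1 y) with (- 2 * y * (INR 3 * pos_part (1 - y ^ 2) ^ 2))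
    by (unfold bump1; simpl; ring).
  apply is_derive_pos_part_pow_comp. lia.
Qed.

Lemma is_derive_bump1 (y : R) : is_derive bump1 y (bump2 y).
Proof.
  replace (bump2 y) with (-6 * pos_part (1 - y ^ 2) ^ 2 +
    -6 * y * (- 2 * y * (INR 2 * pos_part (1 - y ^ 2) ^ 1))) by (unfold bump2; simpl; ring).
  apply (is_derive_Rmult (fun t => -6 * t)); [|apply is_derive_pos_part_pow_comp; lia].
  auto_derive; [easy | ring].
Qed.

Lemma continuity_bump : continuity bump.
Proof. exact (continuity_of_derive _ _ is_derive_bump). Qed.

Lemma continuity_bump1 : continuity bump1.
Proof. exact (continuity_of_derive _ _ is_derive_bump1). Qed.

Lemma continuity_bump2 : continuity bump2.
Proof.
  assert (continuity (fun y => pos_part (1 - y ^ 2))).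
  { apply (continuity_comp (fun y => 1 - y ^ 2) pos_part);
      [continuity_tac | exact continuity_pos_part]. }
  unfold bump2. continuity_tac.
Qed.

Lemma bump_outside (y : R) : 1 <= Rabs y -> bump y = 0 /\ bump1 y = 0 /\ bump2 y = 0.
Proof.
  intros Hy. assert (1 <= y ^ 2) by (rewrite <- (pow2_abs y); nra).
  unfold bump, bump1, bump2. rewrite pos_part_of_nonpos by lra. repeat split; ring.
Qed.

Lemma bump_bounds (y : R) : Rabs (bump y) <= 1 /\ Rabs (bump1 y) <= 6 /\ Rabs (bump2 y) <= 30.
Proof.
  unfold bump, bump1, bump2.
  destruct (Rle_dec (1 - y ^ 2) 0) as [Hout|Hin].
  - rewrite pos_part_of_nonpos by exact Hout. simpl.
    rewrite !Rmult_0_l, !Rmult_0_r, Rplus_0_r, Rabs_R0.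
    lra.
  - rewrite pos_part_of_nonneg by lra.
    assert (Hy : y ^ 2 <= 1) by lra.
    assert (Hay : Rabs y <= 1) by (rewrite <- (pow2_abs y) in Hy; pose proof (Rabs_pos y); nra).
    set (t := 1 - y ^ 2). assert (Ht : 0 < t <= 1) by (pose proof (pow2_ge_0 y); unfold t; lra).
    repeat split.
    + rewrite Rabs_right by (apply Rle_ge, pow_le; lra). simpl. nra.
    + rewrite Rabs_mult, Rabs_mult, (Rabs_right (t ^ 2)) by (apply Rle_ge, pow2_ge_0).
      rewrite (Rabs_left (-6)) by lra. pose proof (Rabs_pos y). simpl. nra.
    + eapply Rle_trans; [apply Rabs_triang|].
      rewrite Rabs_left1 by nra. rewrite Rabs_right by (pose proof (pow2_ge_0 y); nra). nra.
Qed.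

Lemma bump_ge_center (y : R) : Rabs y <= 1 / 2 -> 27 / 64 <= bump y.
Proof.
  intros Hy. assert (y ^ 2 <= 1 / 4) by (rewrite <- (pow2_abs y); pose proof (Rabs_pos y); nra).
  unfold bump. rewrite pos_part_of_nonneg by lra. assert (3 / 4 <= 1 - y ^ 2) by lra. nra.
Qed.

Lemma bump_0 : bump 0 = 1.
Proof. unfold bump. rewrite pos_part_of_nonneg; simpl; lra. Qed.

Definition packet (e xi w x : R) : R := bump (e * x) * cos (xi * x + w).
Definition packet1 (e xi w x : R) : R :=
  e * bump1 (e * x) * cos (xi * x + w) - xi * bump (e * x) * sin (xi * x + w).
Definition packet2 (e xi w x : R) : R :=
  e ^ 2 * bump2 (e * x) * cos (xi * x + w) - 2 * e * xi * bump1 (e * x) * sin (xi * x + w)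
  - xi ^ 2 * bump (e * x) * cos (xi * x + w).

Lemma is_derive_packet (e xi w x : R) : is_derive (packet e xi w) x (packet1 e xi w x).
Proof.
  unfold packet, packet1. auto_derive.
  - exists (bump1 (e * x)). apply is_derive_bump.
  - rewrite (is_derive_unique _ _ _ (is_derive_bump _)). ring.
Qed.

Lemma is_derive_packet1 (e xi w x : R) : is_derive (packet1 e xi w) x (packet2 e xi w x).
Proof.
  unfold packet1, packet2. auto_derive.
  - split; [exists (bump2 (e * x)); apply is_derive_bump1|].
    split; [exists (bump1 (e * x)); apply is_derive_bump|]. exact I.
  - rewrite (is_derive_unique _ _ _ (is_derive_bump _)),
      (is_derive_unique _ _ _ (is_derive_bump1 _)).
    ring.
Qed.

Lemma continuity_packet (e xi w : R) : continuity (packet e xi w).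
Proof. exact (continuity_of_derive _ _ (is_derive_packet e xi w)). Qed.

Lemma continuity_packet1 (e xi w : R) : continuity (packet1 e xi w).
Proof. exact (continuity_of_derive _ _ (is_derive_packet1 e xi w)). Qed.

Lemma continuity_packet2 (e xi w : R) : continuity (packet2 e xi w).
Proof.
  pose proof continuity_bump as Hb. pose proof continuity_bump1 as Hb1.
  pose proof continuity_bump2 as Hb2.
  assert (Hscaled : forall f, continuity f -> continuity (fun x => f (e * x))).
  { intros f Hf. apply (continuity_comp (fun x => e * x) f); [continuity_tac | exact Hf]. }
  assert (continuity (fun x => cos (xi * x + w)))
    by (apply (continuity_affine_comp cos), continuity_cos).
  assert (continuity (fun x => sin (xi * x + w)))
    by (apply (continuity_affine_comp sin), continuity_sin).
  pose proof (Hscaled _ Hb). pose proof (Hscaled _ Hb1). pose proof (Hscaled _ Hb2).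
  unfold packet2. continuity_tac.
Qed.

Lemma packet_outside (e xi w x : R) : 0 < e -> / e <= Rabs x ->
  packet e xi w x = 0 /\ packet1 e xi w x = 0 /\ packet2 e xi w x = 0.
Proof.
  intros He Hx.
  assert (Hex : 1 <= Rabs (e * x)).
  { rewrite Rabs_mult, Rabs_right by lra.
    apply (Rmult_le_compat_l e) in Hx; [|lra]. rewrite Rinv_r in Hx; lra. }
  destruct (bump_outside _ Hex) as [H0 [H1 H2]].
  unfold packet, packet1, packet2. rewrite H0, H1, H2. repeat split; ring.
Qed.

Lemma admissible_packet (e xi w : R) : 0 < e -> cos w <> 0 ->
  admissible (packet e xi w) (packet1 e xi w) (packet2 e xi w).
Proof.
  intros He Hw. split; [intros; apply is_derive_Reals, is_derive_packet|].
  split; [intros; apply is_derive_Reals, is_derive_packet1|].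
  split; [apply continuity_packet2|].
  split; [exists (/ e); intros x Hx; apply packet_outside; lra|].
  exists 0. unfold packet. rewrite !Rmult_0_r, bump_0, Rplus_0_l, Rmult_1_l. exact Hw.
Qed.

Definition packet_I (beta c e xi w : R) : R :=
  RInt (energy_density beta c (packet e xi w) (packet1 e xi w) (packet2 e xi w)) (- / e) (/ e).

Definition packet_K (p e xi w : R) : R :=
  RInt (fun x => abspow (packet e xi w x) (p + 1)) (- / e) (/ e).

Lemma quotients_packet (p beta c e xi w : R) : 1 < p -> 0 < e -> cos w <> 0 ->
  quotients p beta c (packet_I beta c e xi w / Rpower (packet_K p e xi w) (2 / (p + 1))).
Proof.
  intros Hp He Hw.
  pose proof (continuity_packet e xi w) as Cu.
  pose proof (continuity_packet1 e xi w) as Cu1.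
  pose proof (continuity_packet2 e xi w) as Cu2.
  assert (HL : 0 < / e) by (apply Rinv_0_lt_compat, He).
  assert (HF : IntR (fun x => Fprim p (packet e xi w x))
                 (RInt (fun x => Fprim p (packet e xi w x)) (- / e) (/ e))).
  { apply IntR_of_RInt; [exact HL| |].
    - apply (continuity_comp (packet e xi w) (Fprim p)); [exact Cu|].
      unfold Fprim. apply continuity_mult; [apply continuity_abspow; lra | continuity_tac].
    - intros x Hx. unfold Fprim.
      rewrite (proj1 (packet_outside e xi w x He ltac:(lra))), abspow_0. lra. }
  exists (packet e xi w), (packet1 e xi w), (packet2 e xi w), (packet_I beta c e xi w),
    (RInt (fun x => Fprim p (packet e xi w x)) (- / e) (/ e)).
  split; [apply admissible_packet; assumption|].
  split; [|split; [exact HF|]].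
  - apply IntR_of_RInt; [exact HL | unfold energy_density; continuity_tac |].
    intros x Hx. destruct (packet_outside e xi w x He ltac:(lra)) as [-> [-> ->]]. ring.
  - unfold packet_K. rewrite (IntR_Fprim p _ (/ e) (packet e xi w) Hp Cu HL HF); [reflexivity|].
    intros x Hx. apply packet_outside; [exact He | lra].
Qed.

Lemma packet_quarter_shift (e xi w x : R) :
  packet e xi (w - PI / 2) x = bump (e * x) * sin (xi * x + w) /\
  packet1 e xi (w - PI / 2) x =
    e * bump1 (e * x) * sin (xi * x + w) + xi * bump (e * x) * cos (xi * x + w) /\
  packet2 e xi (w - PI / 2) x =
    e ^ 2 * bump2 (e * x) * sin (xi * x + w) + 2 * e * xi * bump1 (e * x) * cos (xi * x + w)
    - xi ^ 2 * bump (e * x) * sin (xi * x + w).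
Proof.
  unfold packet, packet1, packet2.
  replace (xi * x + (w - PI / 2)) with (xi * x + w - PI / 2) by ring.
  rewrite cos_minus, sin_minus, cos_PI2, sin_PI2. repeat split; ring.
Qed.

(* The phases [w] and [w - PI / 2] turn [cos] into [sin]: the packet pair has total
   squared amplitude [bump (e x) ^ 2] and its energy densities add up to an expression free
   of oscillating factors. *)
Lemma packet_pair_sq (e xi w x : R) :
  packet e xi w x ^ 2 + packet e xi (w - PI / 2) x ^ 2 = bump (e * x) ^ 2.
Proof.
  rewrite (proj1 (packet_quarter_shift e xi w x)). unfold packet.
  pose proof (sin2_cos2 (xi * x + w)) as Hsc. unfold Rsqr in Hsc.
  transitivity (bump (e * x) ^ 2 * (sin (xi * x + w) * sin (xi * x + w) +
    cos (xi * x + w) * cos (xi * x + w))); [ring | rewrite Hsc; ring].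
Qed.

Lemma packet_pair_density (beta c e xi w x : R) :
  energy_density beta c (packet e xi w) (packet1 e xi w) (packet2 e xi w) x +
  energy_density beta c (packet e xi (w - PI / 2)) (packet1 e xi (w - PI / 2))
    (packet2 e xi (w - PI / 2)) x =
  (e ^ 2 * bump2 (e * x) - xi ^ 2 * bump (e * x)) ^ 2 + 4 * xi ^ 2 * e ^ 2 * bump1 (e * x) ^ 2
  - beta * (e ^ 2 * bump1 (e * x) ^ 2 + xi ^ 2 * bump (e * x) ^ 2)
  + (1 - c ^ 2) * bump (e * x) ^ 2.
Proof.
  unfold energy_density. destruct (packet_quarter_shift e xi w x) as [-> [-> ->]].
  unfold packet, packet1, packet2.
  pose proof (sin2_cos2 (xi * x + w)) as Hsc. unfold Rsqr in Hsc.
  set (s := sin (xi * x + w)) in *. set (co := cos (xi * x + w)) in *.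
  match goal with |- ?lhs = ?rhs => transitivity ((s * s + co * co) * rhs) end;
    [ring | rewrite Hsc; ring].
Qed.

Lemma c_star_sq (beta : R) : beta < 2 -> c_star beta ^ 2 = 1 - Rmax beta 0 ^ 2 / 4.
Proof.
  intros Hbeta. unfold c_star. apply pow2_sqrt.
  assert (0 <= Rmax beta 0 < 2) by (unfold Rmax; destruct (Rle_dec beta 0); lra). nra.
Qed.

Lemma packet_pair_density_le (beta c e xi w x : R) : beta < 2 -> 0 < e <= 1 ->
  xi ^ 2 = Rmax beta 0 / 2 -> c ^ 2 <= c_star beta ^ 2 ->
  energy_density beta c (packet e xi w) (packet1 e xi w) (packet2 e xi w) x +
  energy_density beta c (packet e xi (w - PI / 2)) (packet1 e xi (w - PI / 2))
    (packet2 e xi (w - PI / 2)) x <=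
  e ^ 2 * (900 + 204 * xi ^ 2 + 36 * Rabs beta) + (c_star beta ^ 2 - c ^ 2).
Proof.
  intros Hbeta He Hxi Hc. rewrite packet_pair_density.
  set (bp := Rmax beta 0) in *.
  assert (Hbb : beta * bp = bp ^ 2) by (unfold bp, Rmax; destruct (Rle_dec beta 0); simpl; ring).
  set (F0 := bump (e * x)). set (F1 := bump1 (e * x)). set (F2 := bump2 (e * x)).
  destruct (bump_bounds (e * x)) as [B0 [B1 B2]]. fold F0 F1 F2 in B0, B1, B2.
  (* [xi ^ 2 = beta_+ / 2] minimises [xi ^ 4 - beta xi ^ 2 + 1 - c ^ 2], whose minimum is
     [c_star ^ 2 - c ^ 2]; all other terms carry a factor [e ^ 2]. *)
  assert (Hexpand :
    (e ^ 2 * F2 - xi ^ 2 * F0) ^ 2 + 4 * xi ^ 2 * e ^ 2 * F1 ^ 2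
    - beta * (e ^ 2 * F1 ^ 2 + xi ^ 2 * F0 ^ 2) + (1 - c ^ 2) * F0 ^ 2 =
    e ^ 2 * (e ^ 2 * F2 ^ 2 - 2 * xi ^ 2 * (F0 * F2) + (4 * xi ^ 2 - beta) * F1 ^ 2)
    + (c_star beta ^ 2 - c ^ 2) * F0 ^ 2).
  { rewrite c_star_sq by exact Hbeta. fold bp.
    replace (xi ^ 2 * F0) with (bp / 2 * F0) by (rewrite Hxi; ring).
    replace (xi ^ 2 * F0 ^ 2) with (bp / 2 * F0 ^ 2) by (rewrite Hxi; ring).
    assert (Hbb' : beta * (bp / 2 * F0 ^ 2) = bp ^ 2 / 2 * F0 ^ 2)
      by (rewrite <- Hbb; field).
    nra. }
  rewrite Hexpand.
  assert (HF0 : F0 ^ 2 <= 1) by (rewrite <- (pow2_abs F0); pose proof (Rabs_pos F0); nra).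
  assert (HF1 : F1 ^ 2 <= 36) by (rewrite <- (pow2_abs F1); pose proof (Rabs_pos F1); nra).
  assert (HF2 : F2 ^ 2 <= 900) by (rewrite <- (pow2_abs F2); pose proof (Rabs_pos F2); nra).
  assert (HF02 : - (F0 * F2) <= 30).
  { pose proof (Rle_abs (- (F0 * F2))) as Habs. rewrite Rabs_Ropp, Rabs_mult in Habs.
    pose proof (Rabs_pos F0). pose proof (Rabs_pos F2). nra. }
  assert (He2 : 0 < e ^ 2 <= 1) by (split; [apply pow_lt | simpl]; nra).
  assert (Hxi0 : 0 <= xi ^ 2) by apply pow2_ge_0.
  assert (Hbeta_abs : - beta <= Rabs beta) by (rewrite <- Rabs_Ropp; apply Rle_abs).
  assert (Hinner : e ^ 2 * F2 ^ 2 - 2 * xi ^ 2 * (F0 * F2) + (4 * xi ^ 2 - beta) * F1 ^ 2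
                   <= 900 + 204 * xi ^ 2 + 36 * Rabs beta).
  { pose proof (pow2_ge_0 F1). pose proof (pow2_ge_0 F2). pose proof (Rabs_pos beta).
    assert ((4 * xi ^ 2 - beta) * F1 ^ 2 <= (4 * xi ^ 2 + Rabs beta) * 36) by nra.
    nra. }
  assert (c ^ 2 <= c_star beta ^ 2) by exact Hc.
  pose proof (pow2_ge_0 F0). nra.
Qed.

Lemma continuity_packet_density (beta c e xi w : R) :
  continuity (energy_density beta c (packet e xi w) (packet1 e xi w) (packet2 e xi w)).
Proof.
  pose proof (continuity_packet e xi w). pose proof (continuity_packet1 e xi w).
  pose proof (continuity_packet2 e xi w). unfold energy_density. continuity_tac.
Qed.

Lemma packet_pair_I_le (beta c e xi w : R) : beta < 2 -> 0 < e <= 1 ->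
  xi ^ 2 = Rmax beta 0 / 2 -> c ^ 2 <= c_star beta ^ 2 ->
  packet_I beta c e xi w + packet_I beta c e xi (w - PI / 2) <=
  2 / e * (e ^ 2 * (900 + 204 * xi ^ 2 + 36 * Rabs beta) + (c_star beta ^ 2 - c ^ 2)).
Proof.
  intros Hbeta He Hxi Hc. unfold packet_I.
  rewrite <- RInt_plus_continuity by apply continuity_packet_density.
  assert (HL : 0 < / e) by (apply Rinv_0_lt_compat; lra).
  eapply Rle_trans.
  - apply RInt_le_continuity with (g := fun _ => e ^ 2 * (900 + 204 * xi ^ 2 + 36 * Rabs beta)
      + (c_star beta ^ 2 - c ^ 2)); [lra | | continuity_tac |].
    + apply continuity_plus; apply continuity_packet_density.
    + intros x _. apply packet_pair_density_le; assumption.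
  - rewrite RInt_const_R. right. field. lra.
Qed.

Lemma RInt_bump_sq_ge (e : R) : 0 < e -> / e / 6 <= RInt (fun x => bump (e * x) ^ 2) (- / e) (/ e).
Proof.
  intros He. set (L := / e). assert (HL : 0 < L) by (apply Rinv_0_lt_compat, He).
  assert (Hc : continuity (fun x => bump (e * x) ^ 2)).
  { apply continuity_pow, (continuity_comp (fun x => e * x) bump); [continuity_tac|].
    exact continuity_bump. }
  rewrite <- (RInt_Chasles_continuity _ (- L) (- (L / 2)) L),
          <- (RInt_Chasles_continuity _ (- (L / 2)) (L / 2) L) by exact Hc.
  assert (0 <= RInt (fun x => bump (e * x) ^ 2) (- L) (- (L / 2)))
    by (apply RInt_ge0_continuity; [lra | exact Hc | intros; apply pow2_ge_0]).
  assert (0 <= RInt (fun x => bump (e * x) ^ 2) (L / 2) L)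
    by (apply RInt_ge0_continuity; [lra | exact Hc | intros; apply pow2_ge_0]).
  assert (L / 6 <= RInt (fun x => bump (e * x) ^ 2) (- (L / 2)) (L / 2)).
  { apply Rle_trans with (RInt (fun _ => 1 / 6) (- (L / 2)) (L / 2));
      [rewrite RInt_const_R; lra|].
    apply RInt_le_continuity; [lra | continuity_tac | exact Hc |].
    intros x Hx. assert (Hex : Rabs (e * x) <= 1 / 2).
    { rewrite Rabs_mult, Rabs_right by lra. apply Rabs_le in Hx.
      replace (1 / 2) with (e * (L / 2)) by (unfold L; field; lra).
      apply Rmult_le_compat_l; lra. }
    apply bump_ge_center in Hex. nra. }
  lra.
Qed.

Lemma packet_pair_K_ge (p e xi w : R) : 1 < p -> 0 < e ->
  Rpower (1 / 6) (p - 1) / (18 * e) <= packet_K p e xi w + packet_K p e xi (w - PI / 2).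
Proof.
  intros Hp He. set (delta := 1 / 6). set (L := / e).
  assert (HL : 0 < L) by (apply Rinv_0_lt_compat, He).
  assert (Hpow : 0 < Rpower delta (p - 1)) by apply exp_pos.
  assert (Hcont : forall w', continuity (fun x => abspow (packet e xi w' x) (p + 1))).
  { intros w'. apply (continuity_comp (packet e xi w') (fun s => abspow s (p + 1)));
      [apply continuity_packet | apply continuity_abspow; lra]. }
  assert (Hcb : continuity (fun x => bump (e * x) ^ 2)).
  { apply continuity_pow, (continuity_comp (fun x => e * x) bump); [continuity_tac|].
    exact continuity_bump. }
  unfold packet_K. fold L. rewrite <- RInt_plus_continuity by apply Hcont.
  assert (Hlow : RInt (fun x => Rpower delta (p - 1) * (bump (e * x) ^ 2 - 2 * delta ^ 2)) (- L) L
      <= RInt (fun x => abspow (packet e xi w x) (p + 1)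
                        + abspow (packet e xi (w - PI / 2) x) (p + 1))
           (- L) L).
  { apply RInt_le_continuity; [lra | continuity_tac | apply continuity_plus; apply Hcont |].
    intros x _. rewrite <- (packet_pair_sq e xi w x).
    pose proof (abspow_ge_sq p (packet e xi w x) delta ltac:(lra) ltac:(unfold delta; lra)).
    pose proof (abspow_ge_sq p (packet e xi (w - PI / 2) x) delta ltac:(lra)
                  ltac:(unfold delta; lra)).
    lra. }
  rewrite (RInt_ext_R _ (fun x => Rpower delta (p - 1) * bump (e * x) ^ 2
                                  + (- (2 * Rpower delta (p - 1) * delta ^ 2)) * 1)) in Hlow
    by (intros; ring).
  rewrite RInt_plus_continuity, RInt_scal_continuity, RInt_scal_continuity, RInt_const_R in Hlow
    by continuity_tac.
  pose proof (RInt_bump_sq_ge e He) as Hbump. fold L in Hbump.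
  replace (Rpower delta (p - 1) / (18 * e)) with (Rpower delta (p - 1) * (L / 18))
    by (unfold L; field; lra).
  unfold delta in *. nra.
Qed.

(** * Upper bound *)

Lemma Rinf_is_glb (E : R -> Prop) (a x0 : R) : (forall x, E x -> a <= x) -> E x0 ->
  is_glb E (Rinf E).
Proof.
  intros Hlow Hx0. unfold Rinf. apply epsilon_spec.
  destruct (completeness (fun x => E (- x))) as [m [Hub Hleast]].
  - exists (- a). intros x Hx. specialize (Hlow _ Hx). lra.
  - exists (- x0). rewrite Ropp_involutive. exact Hx0.
  - exists (- m). split.
    + intros x Hx. assert (- x <= m) by (apply Hub; rewrite Ropp_involutive; exact Hx). lra.
    + intros b Hb. assert (m <= - b) by (apply Hleast; intros x Hx; specialize (Hb _ Hx); lra).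
      lra.
Qed.

Lemma pair_min_bound (m theta Iu Iv Ku Kv G H : R) : 0 < m -> 0 < theta -> 0 < H ->
  m * Rpower Ku theta <= Iu -> m * Rpower Kv theta <= Iv -> Iu + Iv <= G -> 2 * H <= Ku + Kv ->
  m * Rpower H theta <= G.
Proof.
  intros Hm Hth HH Hu Hv HG HK.
  assert (Hpos : forall K, 0 < m * Rpower K theta)
    by (intros; apply Rmult_lt_0_compat; [exact Hm | apply exp_pos]).
  assert (Hmono : forall K, H <= K -> m * Rpower H theta <= m * Rpower K theta).
  { intros K HK'. apply Rmult_le_compat_l; [lra|]. apply Rle_Rpower_l; lra. }
  destruct (Rle_dec Kv Ku) as [Hle|Hlt].
  - pose proof (Hmono Ku ltac:(lra)). pose proof (Hpos Kv). lra.
  - pose proof (Hmono Kv ltac:(lra)). pose proof (Hpos Ku). lra.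
Qed.

Lemma m_inf_packet_bound (p beta c e xi : R) : 1 < p -> beta < 2 -> 0 < e <= 1 ->
  xi ^ 2 = Rmax beta 0 / 2 -> c ^ 2 < c_star beta ^ 2 -> c_star beta ^ 2 - c ^ 2 <= 2 * e ^ 2 ->
  0 < m_inf p beta c /\
  m_inf p beta c * Rpower (Rpower (1 / 6) (p - 1) / 36 / e) (2 / (p + 1)) <=
  2 * (900 + 204 * xi ^ 2 + 36 * Rabs beta + 2) * e.
Proof.
  intros Hp Hbeta He Hxi Hc Hgap.
  assert (Hbc : Rmax beta 0 ^ 2 < 4 * (1 - c ^ 2)) by (rewrite c_star_sq in Hc by exact Hbeta; lra).
  destruct (quotients_lower_bound p beta c Hp Hbc) as [a [Ha Hlow]].
  set (w := PI / 4).
  assert (Hcos : cos w <> 0 /\ cos (w - PI / 2) <> 0).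
  { assert (0 < cos w) by (apply cos_gt_0; unfold w; pose proof PI_RGT_0; lra).
    assert (0 < cos (w - PI / 2)) by (apply cos_gt_0; unfold w; pose proof PI_RGT_0; lra).
    lra. }
  pose proof (quotients_packet p beta c e xi w Hp ltac:(lra) (proj1 Hcos)) as Qu.
  pose proof (quotients_packet p beta c e xi (w - PI / 2) Hp ltac:(lra) (proj2 Hcos)) as Qv.
  destruct (Rinf_is_glb _ a _ Hlow Qu) as [Hlb Hglb].
  fold (m_inf p beta c) in Hlb, Hglb. set (m := m_inf p beta c) in *.
  assert (Hm : 0 < m) by (pose proof (Hglb a Hlow); lra).
  split; [exact Hm|].
  set (theta := 2 / (p + 1)).
  assert (Hquot : forall w',
             quotients p beta c (packet_I beta c e xi w' / Rpower (packet_K p e xi w') theta) ->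
                   m * Rpower (packet_K p e xi w') theta <= packet_I beta c e xi w').
  { intros w' Hq. pose proof (Hlb _ Hq) as Hmq.
    pose proof (exp_pos (theta * ln (packet_K p e xi w'))).
    fold (Rpower (packet_K p e xi w') theta) in *.
    apply (Rmult_le_compat_r (Rpower (packet_K p e xi w') theta)) in Hmq; [|lra].
    unfold Rdiv in Hmq. rewrite Rmult_assoc, Rinv_l, Rmult_1_r in Hmq; lra. }
  apply (pair_min_bound m theta (packet_I beta c e xi w) (packet_I beta c e xi (w - PI / 2))
           (packet_K p e xi w) (packet_K p e xi (w - PI / 2))); auto.
  - apply Rdiv_lt_0_compat; lra.
  - apply Rdiv_lt_0_compat; [apply Rdiv_lt_0_compat; [apply exp_pos | lra] | lra].
  - eapply Rle_trans; [apply packet_pair_I_le; auto; lra|].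
    pose proof (pow2_ge_0 xi). pose proof (Rabs_pos beta).
    assert (2 / e * (e ^ 2 * (900 + 204 * xi ^ 2 + 36 * Rabs beta) + 2 * e ^ 2) =
            2 * (900 + 204 * xi ^ 2 + 36 * Rabs beta + 2) * e) by (field; lra).
    assert (0 < 2 / e) by (apply Rdiv_lt_0_compat; lra).
    assert (c_star beta ^ 2 - c ^ 2 <= 2 * e ^ 2) by exact Hgap. nra.
  - eapply Rle_trans; [|apply packet_pair_K_ge; lra]. right. field. lra.
Qed.

Lemma Rpower_sqrt_scaling (G H X theta : R) : 0 < H -> 0 < X ->
  G * sqrt X / Rpower (H / sqrt X) theta = G * Rpower H (- theta) * Rpower X ((1 + theta) / 2).
Proof.
  intros HH HX. rewrite <- Rpower_sqrt by exact HX.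
  assert (Hs : 0 < Rpower X (/ 2)) by apply exp_pos.
  unfold Rpower in *. rewrite ln_div, ln_exp by assumption. rewrite Rmult_assoc, <- exp_plus.
  assert (Hsplit : exp (/ 2 * ln X) =
    exp (theta * (ln H - / 2 * ln X)) * exp (- theta * ln H + (1 + theta) / 2 * ln X))
    by (rewrite <- exp_plus; f_equal; field).
  rewrite Hsplit. field. apply Rgt_not_eq, exp_pos.
Qed.

Lemma c_star_bounds (beta : R) : beta < 2 -> 0 < c_star beta <= 1.
Proof.
  intros Hbeta. pose proof (c_star_sq beta Hbeta) as Hsq.
  assert (0 <= Rmax beta 0 < 2) by (unfold Rmax; destruct (Rle_dec beta 0); lra).
  assert (Hpos : 0 < c_star beta) by (unfold c_star; apply sqrt_lt_R0; nra).
  split; [exact Hpos | nra].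
Qed.

Lemma m_inf_upper_bound (p beta : R) : 1 < p -> beta < 2 ->
  exists C, 0 < C /\ forall c, 0 < c < c_star beta ->
    0 < m_inf p beta c <= C * Rpower (c_star beta - c) ((p + 3) / (2 * (p + 1))).
Proof.
  intros Hp Hbeta.
  set (xi := sqrt (Rmax beta 0 / 2)).
  assert (Hxi : xi ^ 2 = Rmax beta 0 / 2)
    by (apply pow2_sqrt; unfold Rmax; destruct (Rle_dec beta 0); lra).
  set (G := 2 * (900 + 204 * xi ^ 2 + 36 * Rabs beta + 2)).
  set (H := Rpower (1 / 6) (p - 1) / 36).
  set (theta := 2 / (p + 1)).
  assert (HH : 0 < H) by (apply Rdiv_lt_0_compat; [apply exp_pos | lra]).
  exists (G * Rpower H (- theta)). split.
  { apply Rmult_lt_0_compat; [|apply exp_pos].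
    pose proof (pow2_ge_0 xi). pose proof (Rabs_pos beta). unfold G. lra. }
  intros c Hc. destruct (c_star_bounds beta Hbeta) as [Hcs0 Hcs1].
  set (X := c_star beta - c). assert (HX : 0 < X < 1) by (unfold X; lra).
  set (e := sqrt X).
  assert (He2 : e ^ 2 = X) by (apply pow2_sqrt; lra).
  assert (He : 0 < e <= 1).
  { split; [apply sqrt_lt_R0; lra|]. rewrite <- sqrt_1. apply sqrt_le_1; lra. }
  destruct (m_inf_packet_bound p beta c e xi) as [Hm Hbound]; auto; try (unfold X in He2; nra).
  split; [exact Hm|].
  replace ((p + 3) / (2 * (p + 1))) with ((1 + theta) / 2) by (unfold theta; field; lra).
  rewrite <- Rpower_sqrt_scaling by lra. fold e.
  pose proof (exp_pos (theta * ln (H / e))) as Hpow. fold (Rpower (H / e) theta) in Hpow.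
  apply (Rmult_le_reg_r (Rpower (H / e) theta)); [exact Hpow|].
  unfold Rdiv at 2. rewrite Rmult_assoc, Rinv_l, Rmult_1_r by lra.
  replace (H / e) with (Rpower (1 / 6) (p - 1) / 36 / e) by reflexivity. exact Hbound.
Qed.

Lemma Rpower_le_of_le_Rpower (m C X g r : R) : 0 < m -> 0 < C -> 0 < X -> 0 <= r ->
  m <= C * Rpower X g -> Rpower m r <= Rpower C r * Rpower X (g * r).
Proof.
  intros Hm HC HX Hr Hle.
  rewrite <- Rpower_mult, Rpower_mult_distr by (try apply exp_pos; assumption).
  apply Rle_Rpower_l; [exact Hr | split; assumption].
Qed.

Theorem mainTheorem15 (p beta : R) (hp : 1 < p) (hbeta : beta < 2) :
  exists C delta : R, 0 < C /\ 0 < delta /\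
    forall c : R, c_star beta - delta < c < c_star beta ->
      Rabs (d_val p beta c) <=
        C * Rpower (c_star beta - c) ((p + 3) / (2 * (p - 1))).
Proof.
  destruct (m_inf_upper_bound p beta hp hbeta) as [C [HC Hm]].
  set (k := (p - 1) / (2 * (p + 1))).
  set (r := (p + 1) / (p - 1)).
  assert (Hk : 0 < k) by (apply Rdiv_lt_0_compat; lra).
  assert (Hr : 0 < r) by (apply Rdiv_lt_0_compat; lra).
  exists (k * Rpower C r), (c_star beta).
  split; [apply Rmult_lt_0_compat; [exact Hk | apply exp_pos]|].
  split; [apply c_star_bounds, hbeta|].
  intros c Hc. destruct (Hm c ltac:(lra)) as [Hm0 Hmle].
  unfold d_val. fold k r.
  rewrite Rabs_right by (apply Rle_ge, Rmult_le_pos; [lra | left; apply exp_pos]).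
  rewrite Rmult_assoc. apply Rmult_le_compat_l; [lra|].
  replace ((p + 3) / (2 * (p - 1))) with ((p + 3) / (2 * (p + 1)) * r) by (unfold r; field; lra).
  apply Rpower_le_of_le_Rpower; auto; lra.
Qed.
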